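(* Let $\{\triangleright\} \subseteq \sigma \subseteq \{\triangleright, ;, \wedge, \mathrm{upd}, \sqcup, \mathsf{D}, \mathsf{A}\}$ and let $\mathcal{K}$ be the class of $\sigma$-algebras that have a meet-complete representation by partial functions. Then $\mathcal{K}$ is not closed under subalgebras, not closed under unions of directed families of algebras (directed unions), and not closed under homomorphic images. Consequently $\mathcal{K}$ is not axiomatisable by any universal first-order theory, by any universal-existential first-order theory, or by any positive first-order theory.
   Context: The operations are interpreted on partial functions on a base set $X$ as: $f \triangleright g = \{(x,y) \in g : x \notin \mathrm{dom}(f)\}$ (antidomain restriction); $f;g = \{(x,z):\exists y\,((x,y)\in f,(y,z)\in g)\}$ (composition); $f\wedge g = f\cap g$; $\mathrm{upd}(f,g)(x)$ is $f(x)$ if $f(x)$ defined and $g(x)$ undefined, $g(x)$ if both defined, undefined otherwise (update); $(f\sqcup g)(x)$ is $f(x)$ if defined, else $g(x)$ (preferential union); $\mathsf{D}(f)$ = identity on $\mathrm{dom}(f)$; $\mathsf{A}(f)$ = identity on $X\setminus\mathrm{dom}(f)$. A representation by partial functions is an isomorphism onto a $\sigma$-algebra of partial functions with these operations. Define $0 := a\triangleright a$, $a\lhd b := (a\triangleright b)\triangleright b$, $a \le b :\iff a\lhd b = a$; for representable algebras this is a partial order and $a\le b\iff\theta(a)\subseteq\theta(b)$. A representation $\theta$ is meet complete if for every nonempty $S$ with $\bigwedge S$ existing in $(\mathcal{A},\le)$, $\theta(\bigwedge S)=\bigcap\theta[S]$. *)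

From Stdlib Require Import Bool.

Set Implicit Arguments.

Inductive op := ORes | OComp | OMeet | OUpd | OPref | ODom | OAnt.

Definition signature := op -> bool.

(* ---------- Algebras ----------
   An algebra carries interpretations of all seven symbols; for a signature
   sigma, only the symbols in sigma are ever used (by homomorphisms,
   representations, formulas), so an [alg] plays the role of a sigma-algebra
   (its sigma-reduct); the other operations are irrelevant junk. *)
Record alg := Alg {
  car  : Type;
  res  : car -> car -> car;
  comp : car -> car -> car;
  meet : car -> car -> car;
  upd  : car -> car -> car;
  pref : car -> car -> car;
  dom  : car -> car;
  ant  : car -> car
}.

Definition pfun (X : Type) := X -> option X.

Definition pf_res X (f g : pfun X) : pfun X :=
  fun x => match f x with Some _ => None | None => g x end.
Definition pf_comp X (f g : pfun X) : pfun X :=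
  fun x => match f x with Some y => g y | None => None end.
Definition pf_upd X (f g : pfun X) : pfun X :=
  fun x => match f x with
           | None => None
           | Some y => match g x with Some z => Some z | None => Some y end
           end.
Definition pf_pref X (f g : pfun X) : pfun X :=
  fun x => match f x with Some y => Some y | None => g x end.
Definition pf_dom X (f : pfun X) : pfun X :=
  fun x => match f x with Some _ => Some x | None => None end.
Definition pf_ant X (f : pfun X) : pfun X :=
  fun x => match f x with Some _ => None | None => Some x end.
Definition pf_is_meet X (f g h : pfun X) : Prop :=
  forall x y, h x = Some y <-> (f x = Some y /\ g x = Some y).

Definition representation (sigma : signature) (A : alg) (X : Type)
    (theta : car A -> pfun X) : Prop :=
  (forall a b, (forall x, theta a x = theta b x) -> a = b) /\
  (sigma ORes = true -> forall a b x,
      theta (res A a b) x = pf_res (theta a) (theta b) x) /\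
  (sigma OComp = true -> forall a b x,
      theta (comp A a b) x = pf_comp (theta a) (theta b) x) /\
  (sigma OMeet = true -> forall a b,
      pf_is_meet (theta a) (theta b) (theta (meet A a b))) /\
  (sigma OUpd = true -> forall a b x,
      theta (upd A a b) x = pf_upd (theta a) (theta b) x) /\
  (sigma OPref = true -> forall a b x,
      theta (pref A a b) x = pf_pref (theta a) (theta b) x) /\
  (sigma ODom = true -> forall a x, theta (dom A a) x = pf_dom (theta a) x) /\
  (sigma OAnt = true -> forall a x, theta (ant A a) x = pf_ant (theta a) x).

Definition lhd (A : alg) (a b : car A) : car A := res A (res A a b) b.
Definition ale (A : alg) (a b : car A) : Prop := lhd A a b = a.

Definition is_glb (A : alg) (S : car A -> Prop) (m : car A) : Prop :=
  (forall s, S s -> ale A m s) /\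
  (forall l, (forall s, S s -> ale A l s) -> ale A l m).

Definition meet_complete (A : alg) (X : Type) (theta : car A -> pfun X) : Prop :=
  forall S : car A -> Prop, (exists s, S s) ->
  forall m, is_glb A S m ->
  forall x y, theta m x = Some y <-> (forall s, S s -> theta s x = Some y).

Definition inK (sigma : signature) (A : alg) : Prop :=
  exists (X : Type) (theta : car A -> pfun X),
    representation sigma A theta /\ meet_complete A theta.

Definition sigma_hom (sigma : signature) (A B : alg) (f : car A -> car B) : Prop :=
  (sigma ORes = true -> forall a b, f (res A a b) = res B (f a) (f b)) /\
  (sigma OComp = true -> forall a b, f (comp A a b) = comp B (f a) (f b)) /\
  (sigma OMeet = true -> forall a b, f (meet A a b) = meet B (f a) (f b)) /\
  (sigma OUpd = true -> forall a b, f (upd A a b) = upd B (f a) (f b)) /\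
  (sigma OPref = true -> forall a b, f (pref A a b) = pref B (f a) (f b)) /\
  (sigma ODom = true -> forall a, f (dom A a) = dom B (f a)) /\
  (sigma OAnt = true -> forall a, f (ant A a) = ant B (f a)).

(* closed under subalgebras (B embeds into A, i.e. is isomorphic to a
   subalgebra of A) *)
Definition K_closed_sub (sigma : signature) : Prop :=
  forall (A B : alg) (f : car B -> car A),
    (forall x y, f x = f y -> x = y) -> sigma_hom sigma B A f ->
    inK sigma A -> inK sigma B.

Definition K_closed_himg (sigma : signature) : Prop :=
  forall (A B : alg) (f : car A -> car B),
    (forall b, exists a, f a = b) -> sigma_hom sigma A B f ->
    inK sigma A -> inK sigma B.

(* closed under directed unions: U is the union of a nonempty family of
   subalgebras (given as embeddings e i of algebras Af i), directed under
   inclusion, all of them in K *)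
Definition K_closed_dunion (sigma : signature) : Prop :=
  forall (I : Type) (Af : I -> alg) (U : alg) (e : forall i, car (Af i) -> car U),
    inhabited I ->
    (forall i, (forall x y, e i x = e i y -> x = y) /\ sigma_hom sigma (Af i) U (e i)) ->
    (forall i j, exists k,
        (forall a, exists b, e k b = e i a) /\ (forall a, exists b, e k b = e j a)) ->
    (forall u, exists i a, e i a = u) ->
    (forall i, inK sigma (Af i)) ->
    inK sigma U.

Inductive term :=
  | TVar  : nat -> term
  | TRes  : term -> term -> term
  | TComp : term -> term -> term
  | TMeet : term -> term -> term
  | TUpd  : term -> term -> term
  | TPref : term -> term -> term
  | TDom  : term -> term
  | TAnt  : term -> term.

Fixpoint term_ok (sigma : signature) (t : term) : bool :=
  match t with
  | TVar _ => true
  | TRes a b => sigma ORes && term_ok sigma a && term_ok sigma b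
  | TComp a b => sigma OComp && term_ok sigma a && term_ok sigma b
  | TMeet a b => sigma OMeet && term_ok sigma a && term_ok sigma b
  | TUpd a b => sigma OUpd && term_ok sigma a && term_ok sigma b
  | TPref a b => sigma OPref && term_ok sigma a && term_ok sigma b
  | TDom a => sigma ODom && term_ok sigma a
  | TAnt a => sigma OAnt && term_ok sigma a
  end.

Fixpoint eval (A : alg) (env : nat -> car A) (t : term) : car A :=
  match t with
  | TVar n => env n
  | TRes a b => res A (eval A env a) (eval A env b)
  | TComp a b => comp A (eval A env a) (eval A env b)
  | TMeet a b => meet A (eval A env a) (eval A env b)
  | TUpd a b => upd A (eval A env a) (eval A env b)
  | TPref a b => pref A (eval A env a) (eval A env b)
  | TDom a => dom A (eval A env a)
  | TAnt a => ant A (eval A env a)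
  end.

Inductive formula :=
  | FTrue  : formula
  | FFalse : formula
  | FEq    : term -> term -> formula
  | FNot   : formula -> formula
  | FAnd   : formula -> formula -> formula
  | FOr    : formula -> formula -> formula
  | FImp   : formula -> formula -> formula
  | FAll   : nat -> formula -> formula
  | FEx    : nat -> formula -> formula.

Fixpoint formula_ok (sigma : signature) (p : formula) : bool :=
  match p with
  | FTrue | FFalse => true
  | FEq s t => term_ok sigma s && term_ok sigma t
  | FNot q => formula_ok sigma q
  | FAnd q r | FOr q r | FImp q r => formula_ok sigma q && formula_ok sigma r
  | FAll _ q | FEx _ q => formula_ok sigma q
  end.

Definition upd_env (T : Type) (env : nat -> T) (n : nat) (a : T) : nat -> T :=
  fun m => if Nat.eqb m n then a else env m.

Fixpoint sat (A : alg) (env : nat -> car A) (p : formula) : Prop :=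
  match p with
  | FTrue => True
  | FFalse => False
  | FEq s t => eval A env s = eval A env t
  | FNot q => ~ sat A env q
  | FAnd q r => sat A env q /\ sat A env r
  | FOr q r => sat A env q \/ sat A env r
  | FImp q r => sat A env q -> sat A env r
  | FAll n q => forall a : car A, sat A (upd_env env n a) q
  | FEx n q => exists a : car A, sat A (upd_env env n a) q
  end.

Definition holds (A : alg) (p : formula) : Prop := forall env, sat A env p.

Fixpoint qfree (p : formula) : bool :=
  match p with
  | FAll _ _ | FEx _ _ => false
  | FTrue | FFalse | FEq _ _ => true
  | FNot q => qfree q
  | FAnd q r | FOr q r | FImp q r => qfree q && qfree r
  end.

Inductive universal : formula -> Prop :=
  | univ_qf : forall p, qfree p = true -> universal p
  | univ_all : forall n p, universal p -> universal (FAll n p).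

Inductive existential : formula -> Prop :=
  | ex_qf : forall p, qfree p = true -> existential p
  | ex_ex : forall n p, existential p -> existential (FEx n p).

Inductive univ_exist : formula -> Prop :=
  | ae_ex : forall p, existential p -> univ_exist p
  | ae_all : forall n p, univ_exist p -> univ_exist (FAll n p).

Inductive positive : formula -> Prop :=
  | pos_true : positive FTrue
  | pos_false : positive FFalse
  | pos_eq : forall s t, positive (FEq s t)
  | pos_and : forall p q, positive p -> positive q -> positive (FAnd p q)
  | pos_or : forall p q, positive p -> positive q -> positive (FOr p q)
  | pos_all : forall n p, positive p -> positive (FAll n p)
  | pos_ex : forall n p, positive p -> positive (FEx n p).

Definition axiomatisable_by (sigma : signature) (kind : formula -> Prop) : Prop :=
  exists T : formula -> Prop,
    (forall p, T p -> kind p /\ formula_ok sigma p = true) /\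
    (forall A : alg, inK sigma A <-> (forall p, T p -> holds A p)).

(* The obstruction (not_inK_of_splitting): if some element is nonzero and
   every nonzero element l is split by some c (l is neither below c |> l nor
   below c <| l), no representation is meet complete, since for a pair (x,y)
   in a nonzero element the elements containing (x,y) have meet 0.

   All counterexamples are fields of sets over Cantor space, represented by
   partial identities.  A field of sets in which every point has a least
   member containing it is in K (inK_of_least_nbhds).  The clopen algebra is
   split everywhere, so it is not in K; yet it is a subalgebra of the
   powerset algebra, the directed union of the algebras of sets depending on
   the first n bits, and the quotient of the algebra of sets that are clopen
   modulo nowhere dense sets -- and all of these have least neighbourhoods.
   Finally the classical preservation theorems (positive sentences under
   surjective homomorphisms, universal-existential sentences under directed
   unions) turn the non-closure results into non-axiomatisability. *)

From Stdlib Require Import Bool Arith Lia List ProofIrrelevance FunctionalExtensionality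
  Classical ClassicalEpsilon.

Section Representation.

Variables (sigma : signature) (A : alg) (X : Type) (theta : car A -> pfun X).
Hypothesis Hres : sigma ORes = true.
Hypothesis Hrep : representation sigma A theta.

Lemma rep_res (a b : car A) (x : X) :
  theta (res A a b) x = pf_res (theta a) (theta b) x.
Proof. exact (proj1 (proj2 Hrep) Hres a b x). Qed.

Lemma rep_lhd (a b : car A) (x : X) :
  theta (lhd A a b) x = match theta a x with Some _ => theta b x | None => None end.
Proof.
  unfold lhd. rewrite rep_res. unfold pf_res. rewrite rep_res. unfold pf_res.
  destruct (theta a x), (theta b x); reflexivity.
Qed.

Lemma rep_ale_iff (l s : car A) :
  ale A l s <-> forall x y, theta l x = Some y -> theta s x = Some y.
Proof.
  split.
  - intros E x y Hl. rewrite <- E, rep_lhd in Hl.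
    destruct (theta l x); [exact Hl | discriminate].
  - intros Hsub. apply (proj1 Hrep). intro x. rewrite rep_lhd.
    destruct (theta l x) as [y|] eqn:E; [exact (Hsub x y E) | reflexivity].
Qed.

Lemma rep_zero (a : car A) (x : X) : theta (res A a a) x = None.
Proof. rewrite rep_res. unfold pf_res. destruct (theta a x); reflexivity. Qed.

Lemma rep_nonzero_point (a : car A) :
  a <> res A a a -> exists x y, theta a x = Some y.
Proof.
  intro Ha. apply NNPP. intro Hn. apply Ha, (proj1 Hrep). intro x.
  rewrite rep_zero. destruct (theta a x) eqn:E; [exfalso; eauto | reflexivity].
Qed.

Lemma rep_ale_res_self (l b : car A) (x : X) :
  ale A l (res A l b) -> theta l x = None.
Proof.
  intro Hlr. destruct (theta l x) as [y|] eqn:E; [|reflexivity].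
  pose proof (proj1 (rep_ale_iff l _) Hlr x y E) as E'.
  rewrite rep_res in E'. unfold pf_res in E'. rewrite E in E'. discriminate.
Qed.

End Representation.

Arguments rep_res {sigma A X theta} Hres Hrep.
Arguments rep_lhd {sigma A X theta} Hres Hrep.
Arguments rep_ale_iff {sigma A X theta} Hres Hrep.
Arguments rep_zero {sigma A X theta} Hres Hrep.
Arguments rep_nonzero_point {sigma A X theta} Hres Hrep.
Arguments rep_ale_res_self {sigma A X theta} Hres Hrep.

Definition splits (A : alg) (c l : car A) : Prop :=
  ~ ale A l (res A c l) /\ ~ ale A l (lhd A c l).

(* For a pair (x,y)
   in the function representing a nonzero [a], the set of elements whose
   function contains (x,y) has meet 0, yet (x,y) lies in all of them. *)
Lemma not_inK_of_splitting (sigma : signature) (Hres : sigma ORes = true)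
    (A : alg) (a : car A) (Ha : a <> res A a a)
    (Hsplit : forall l, l <> res A l l -> exists c, splits A c l) :
  ~ inK sigma A.
Proof.
  intros [X [theta [Hrep Hmc]]].
  pose proof (rep_ale_iff Hres Hrep) as Hale.
  destruct (rep_nonzero_point Hres Hrep a Ha) as [x [y Hxy]].
  set (S := fun s => theta s x = Some y).
  assert (Hglb : is_glb A S (res A a a)).
  { split.
    - intros s _. apply Hale. intros x' y'. rewrite (rep_zero Hres Hrep). discriminate.
    - intros l Hl. apply Hale. intros x' y' Hlx'. exfalso.
      destruct (theta l x) as [y0|] eqn:Elx.
      + (* [l] contains (x,y); the part of [l] cut out by a splitting [c]
           containing x is in [S], contradicting that [l] is a lower bound *)
        assert (Ely : theta l x = Some y).
        { rewrite Elx. symmetry. rewrite <- Hxy. exact (proj1 (Hale l a) (Hl a Hxy) x y0 Elx). }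
        assert (Hl_nz : l <> res A l l).
        { intro E. rewrite E, (rep_zero Hres Hrep) in Hlx'. discriminate. }
        destruct (Hsplit l Hl_nz) as [c [Hc_out Hc_in]].
        destruct (theta c x) eqn:Ecx.
        * apply Hc_in, Hl. unfold S. rewrite (rep_lhd Hres Hrep), Ecx. exact Ely.
        * apply Hc_out, Hl. unfold S. rewrite (rep_res Hres Hrep). unfold pf_res.
          rewrite Ecx. exact Ely.
      + (* x is outside the domain of [l], so [l |> a] is in [S] and [l] is empty *)
        assert (Hlr : ale A l (res A l a)).
        { apply Hl. unfold S. rewrite (rep_res Hres Hrep). unfold pf_res.
          rewrite Elx. exact Hxy. }
        rewrite (rep_ale_res_self Hres Hrep l a x' Hlr) in Hlx'. discriminate. }
  pose proof (proj2 (Hmc S (ex_intro _ a Hxy) _ Hglb x y) (fun s Hs => Hs)) as H0.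
  rewrite (rep_zero Hres Hrep) in H0. discriminate.
Qed.

(* A family of subsets (as characteristic functions) closed under every
   pointwise binary boolean combination, i.e. a field of sets. *)
Definition bool_closed {X : Type} (P : (X -> bool) -> Prop) : Prop :=
  forall (g : bool -> bool -> bool) (a b : X -> bool),
    P a -> P b -> P (fun x => g (a x) (b x)).

Section FieldOfSets.

Variables (X : Type) (P : (X -> bool) -> Prop).
Hypothesis P_closed : bool_closed P.

Definition member := {S : X -> bool | P S}.

Definition lift2 (g : bool -> bool -> bool) (a b : member) : member :=
  exist _ (fun x => g (proj1_sig a x) (proj1_sig b x))
    (P_closed g _ _ (proj2_sig a) (proj2_sig b)).
Definition lift1 (g : bool -> bool) (a : member) : member :=
  lift2 (fun u _ => g u) a a.

(* The operations induced on partial identities: [a |> b] is the part of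
   [b] outside [a], composition and meet are intersection, update keeps the
   domain of its first argument, preferential union is union, D is the
   identity and A is complement. *)
Definition field_of_sets : alg := {|
  car := member;
  res := lift2 (fun u v => negb u && v);
  comp := lift2 andb;
  meet := lift2 andb;
  upd := lift2 (fun u _ => u);
  pref := lift2 orb;
  dom := lift1 (fun u => u);
  ant := lift1 negb |}.

Lemma member_ext (a b : member) :
  (forall x, proj1_sig a x = proj1_sig b x) -> a = b.
Proof.
  destruct a as [a Ha], b as [b Hb]; simpl; intro E.
  assert (a = b) by (apply functional_extensionality; exact E). subst b.
  f_equal. apply proof_irrelevance.
Qed.

Definition ident (a : member) : pfun X :=
  fun x => if proj1_sig a x then Some x else None.

Lemma ident_rep (sigma : signature) : representation sigma field_of_sets ident.
Proof.
  unfold representation, ident, pf_is_meet, pf_res, pf_comp, pf_upd, pf_pref, pf_dom, pf_ant.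
  split.
  - intros a b Hab. apply member_ext. intro x. specialize (Hab x).
    destruct (proj1_sig a x), (proj1_sig b x); congruence.
  - repeat split; intros; cbn in *;
      repeat (destruct (proj1_sig _ _)); simpl in *; intuition congruence.
Qed.

Lemma subset_ale (l s : member) :
  ale field_of_sets l s <-> forall x, proj1_sig l x = true -> proj1_sig s x = true.
Proof.
  rewrite (rep_ale_iff (sigma := fun _ => true) eq_refl (ident_rep _)). unfold ident.
  split.
  - intros H x Hl. specialize (H x x). rewrite Hl in H.
    destruct (proj1_sig s x); [reflexivity | discriminate (H eq_refl)].
  - intros H x y Hl. destruct (proj1_sig l x) eqn:E; [|discriminate].
    rewrite (H x E). exact Hl.
Qed.

Definition least_nbhds : Prop :=
  forall p, exists l : member, proj1_sig l p = true /\
    forall s : member, proj1_sig s p = true ->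
    forall x, proj1_sig l x = true -> proj1_sig s x = true.

(* If every point has a least neighbourhood, the identity representation is
   meet complete: a point lying in all sets of a family lies in its meet. *)
Lemma inK_of_least_nbhds (sigma : signature) :
  least_nbhds -> inK sigma field_of_sets.
Proof.
  intro Hleast. exists X, ident. split; [apply ident_rep|].
  intros S [s0 Hs0] m [Hlb Hgr] x y. unfold ident. split.
  - intros Hm s Hs. destruct (proj1_sig m x) eqn:E; [|discriminate].
    rewrite (proj1 (subset_ale m s) (Hlb s Hs) x E). exact Hm.
  - intros Hall. pose proof (Hall s0 Hs0) as E0.
    destruct (proj1_sig s0 x) eqn:E; [|discriminate]. injection E0 as <-.
    destruct (Hleast x) as [l [Hlx Hl]].
    assert (Hlm : ale field_of_sets l m).
    { apply Hgr. intros s Hs. apply subset_ale. apply Hl.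
      specialize (Hall s Hs). destruct (proj1_sig s x); congruence. }
    rewrite (proj1 (subset_ale l m) Hlm x Hlx). reflexivity.
Qed.

Lemma not_inK_of_set_splitting (sigma : signature) (Hres : sigma ORes = true)
    (a : member) (p : X) (Hap : proj1_sig a p = true)
    (Hsplit : forall l : member, (exists x, proj1_sig l x = true) ->
       exists c : member, (exists x, proj1_sig l x = true /\ proj1_sig c x = true) /\
                          (exists x, proj1_sig l x = true /\ proj1_sig c x = false)) :
  ~ inK sigma field_of_sets.
Proof.
  apply (not_inK_of_splitting sigma Hres field_of_sets a).
  - intro E. apply (f_equal (fun t : member => proj1_sig t p)) in E.
    cbn in E. rewrite Hap in E. discriminate.
  - intros l Hl.
    assert (Hne : exists x, proj1_sig l x = true).
    { apply NNPP. intro Hn. apply Hl. apply member_ext. intro x. cbn.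
      destruct (proj1_sig l x) eqn:E; [exfalso; eauto | reflexivity]. }
    destruct (Hsplit l Hne) as [c [[x1 [Hl1 Hc1]] [x2 [Hl2 Hc2]]]].
    exists c. split; rewrite subset_ale; intro H.
    + specialize (H x1 Hl1). cbn in H. rewrite Hc1 in H. discriminate.
    + specialize (H x2 Hl2). cbn in H. rewrite Hc2, Hl2 in H. discriminate.
Qed.

End FieldOfSets.

Arguments member {X} P.
Arguments lift2 {X P} P_closed g a b.
Arguments field_of_sets {X P} P_closed.
Arguments member_ext {X P} a b.
Arguments least_nbhds {X} P.
Arguments inK_of_least_nbhds {X P} P_closed sigma.
Arguments not_inK_of_set_splitting {X P} P_closed {sigma} Hres a p Hap Hsplit.

Lemma boolean_map_hom {X : Type} {P Q : (X -> bool) -> Prop}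
    (HP : bool_closed P) (HQ : bool_closed Q)
    (f : member P -> member Q)
    (Hf : forall g a b x,
       proj1_sig (f (lift2 HP g a b)) x = g (proj1_sig (f a) x) (proj1_sig (f b) x))
    (sigma : signature) :
  sigma_hom sigma (field_of_sets HP) (field_of_sets HQ) f.
Proof.
  unfold sigma_hom. repeat split; intros; apply member_ext; intro x; apply Hf.
Qed.

Definition inclusion {X : Type} {P Q : (X -> bool) -> Prop}
    (PQ : forall S, P S -> Q S) (s : member P) : member Q :=
  exist _ (proj1_sig s) (PQ _ (proj2_sig s)).

Lemma inclusion_injective {X : Type} {P Q : (X -> bool) -> Prop}
    (PQ : forall S, P S -> Q S) (a b : member P) :
  inclusion PQ a = inclusion PQ b -> a = b.
Proof.
  intro E. apply member_ext. intro x.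
  exact (f_equal (fun t : member Q => proj1_sig t x) E).
Qed.

Lemma inclusion_hom {X : Type} {P Q : (X -> bool) -> Prop}
    (HP : bool_closed P) (HQ : bool_closed Q)
    (PQ : forall S, P S -> Q S) (sigma : signature) :
  sigma_hom sigma (field_of_sets HP) (field_of_sets HQ) (inclusion PQ).
Proof. apply boolean_map_hom. reflexivity. Qed.

Definition truth (Q : Prop) : bool := if excluded_middle_informative Q then true else false.

Lemma truth_spec (Q : Prop) : truth Q = true <-> Q.
Proof. unfold truth. destruct (excluded_middle_informative Q); split; auto; discriminate. Qed.

Definition cantor := nat -> bool.

Definition agree (n : nat) (x y : cantor) : Prop := forall k, k < n -> x k = y k.

Definition det (n : nat) (S : cantor -> bool) : Prop :=
  forall x y, agree n x y -> S x = S y.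
Definition clopen (S : cantor -> bool) : Prop := exists n, det n S.

Lemma det_mono (n m : nat) (S : cantor -> bool) : n <= m -> det n S -> det m S.
Proof. intros Hnm H x y Hxy. apply H. intros k Hk. apply Hxy. lia. Qed.

Lemma det_closed (n : nat) : bool_closed (det n).
Proof. intros g a b Ha Hb x y H. rewrite (Ha x y H), (Hb x y H). reflexivity. Qed.

Lemma clopen_closed : bool_closed clopen.
Proof.
  intros g a b [n Ha] [m Hb]. exists (max n m).
  apply det_closed; [apply (det_mono n) | apply (det_mono m)]; auto; lia.
Qed.

Definition cylinder (p : cantor) (n : nat) : cantor -> bool :=
  fun x => truth (agree n p x).

Lemma cylinder_det (p : cantor) (n : nat) : det n (cylinder p n).
Proof.
  intros x y Hxy. unfold cylinder, truth.
  assert (agree n p x <-> agree n p y).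
  { split; intros H k Hk; [rewrite <- Hxy | rewrite Hxy]; auto. }
  destruct (excluded_middle_informative (agree n p x)),
           (excluded_middle_informative (agree n p y)); first [reflexivity | tauto].
Qed.

Lemma cylinder_self (p : cantor) (n : nat) : cylinder p n p = true.
Proof. apply truth_spec. intros k _. reflexivity. Qed.

Definition singleton (p : cantor) : cantor -> bool := fun x => truth (x = p).

Definition flip_bit (n : nat) (p : cantor) : cantor :=
  fun k => if Nat.eqb k n then negb (p n) else p k.

Lemma flip_bit_agree (n : nat) (p : cantor) : agree n p (flip_bit n p).
Proof. intros k Hk. unfold flip_bit. destruct (Nat.eqb_spec k n); [lia | reflexivity]. Qed.

Lemma flip_bit_not_agree (n : nat) (p : cantor) : ~ agree (S n) p (flip_bit n p).
Proof.
  intro H. specialize (H n (Nat.lt_succ_diag_r n)). unfold flip_bit in H.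
  rewrite Nat.eqb_refl in H. destruct (p n); discriminate.
Qed.

Definition clopen_alg : alg := field_of_sets clopen_closed.

(* It is not in K: a nonempty clopen set depending on [n] bits is split by
   the cylinder of depth [n+1] around one of its points. *)
Lemma clopen_alg_not_inK (sigma : signature) (Hres : sigma ORes = true) :
  ~ inK sigma clopen_alg.
Proof.
  apply (not_inK_of_set_splitting clopen_closed Hres
           (exist _ (fun _ => true) (ex_intro _ 0 (fun x y _ => eq_refl)))
           (fun _ => true) eq_refl).
  intros l [p Hp]. destruct (proj2_sig l) as [n Hn].
  exists (exist _ (cylinder p (S n)) (ex_intro _ (S n) (cylinder_det p (S n)))). simpl proj1_sig.
  split.
  - exists p. split; [exact Hp | apply cylinder_self].
  - exists (flip_bit n p). split.
    + rewrite <- Hp. symmetry. apply Hn, flip_bit_agree.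
    + apply not_true_iff_false. unfold cylinder. rewrite truth_spec.
      apply flip_bit_not_agree.
Qed.

Lemma singleton_self (p : cantor) : singleton p p = true.
Proof. apply truth_spec. reflexivity. Qed.

Lemma singleton_eq (p x : cantor) : singleton p x = true -> x = p.
Proof. apply truth_spec. Qed.

Lemma singletons_least_nbhds (P : (cantor -> bool) -> Prop) :
  (forall p, P (singleton p)) -> least_nbhds P.
Proof.
  intros HP p. exists (exist _ (singleton p) (HP p)). split; [apply singleton_self|].
  intros s Hs x Hx. cbn in Hx. apply singleton_eq in Hx. subst x. exact Hs.
Qed.

Lemma all_closed : bool_closed (fun _ : cantor -> bool => True).
Proof. intros g a b _ _. exact I. Qed.

Definition powerset_alg : alg := field_of_sets all_closed.

Lemma powerset_alg_inK (sigma : signature) : inK sigma powerset_alg.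
Proof. apply inK_of_least_nbhds, singletons_least_nbhds. intros _. exact I. Qed.

(* K is not closed under subalgebras: the clopen algebra embeds in the
   powerset algebra. *)
Lemma not_closed_sub (sigma : signature) (Hres : sigma ORes = true) :
  ~ K_closed_sub sigma.
Proof.
  intro H. apply (clopen_alg_not_inK sigma Hres).
  apply (H powerset_alg clopen_alg (inclusion (fun S _ => I))).
  - apply inclusion_injective.
  - apply inclusion_hom.
  - apply powerset_alg_inK.
Qed.

Definition finite_alg (n : nat) : alg := field_of_sets (det_closed n).

(* In it, the cylinder of depth [n] is the least neighbourhood of a point. *)
Lemma finite_alg_inK (sigma : signature) (n : nat) : inK sigma (finite_alg n).
Proof.
  apply inK_of_least_nbhds. intro p.
  exists (exist _ (cylinder p n) (cylinder_det p n)). split; [apply cylinder_self|].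
  intros s Hs x Hx. rewrite <- Hs. symmetry. apply (proj2_sig s).
  exact (proj1 (truth_spec _) Hx).
Qed.

Lemma det_clopen (n : nat) (S : cantor -> bool) : det n S -> clopen S.
Proof. intro H. exists n. exact H. Qed.

(* K is not closed under directed unions: the clopen algebra is the union of
   the chain of finite algebras. *)
Lemma not_closed_dunion (sigma : signature) (Hres : sigma ORes = true) :
  ~ K_closed_dunion sigma.
Proof.
  intro H. apply (clopen_alg_not_inK sigma Hres).
  apply (H nat finite_alg clopen_alg (fun n => inclusion (det_clopen n))).
  - constructor. exact 0.
  - intro n. split; [apply inclusion_injective | apply inclusion_hom].
  - intros i j. exists (max i j). split; intro a.
    + exists (exist _ (proj1_sig a) (det_mono i _ _ (Nat.le_max_l i j) (proj2_sig a))).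
      apply member_ext. reflexivity.
    + exists (exist _ (proj1_sig a) (det_mono j _ _ (Nat.le_max_r i j) (proj2_sig a))).
      apply member_ext. reflexivity.
  - intros [S [n Hn]]. exists n, (exist _ S Hn). apply member_ext. reflexivity.
  - intro n. apply finite_alg_inK.
Qed.

Definition nowhere_dense (S : cantor -> bool) : Prop :=
  forall p n, exists q m, forall y, agree m q y -> agree n p y /\ S y = false.

Lemma nwd_subset (S T : cantor -> bool) :
  (forall x, S x = true -> T x = true) -> nowhere_dense T -> nowhere_dense S.
Proof.
  intros Hsub HT p n. destruct (HT p n) as [q [m Hqm]]. exists q, m.
  intros y Hy. destruct (Hqm y Hy) as [Hpy Ty]. split; [exact Hpy|].
  destruct (S y) eqn:E; [rewrite (Hsub y E) in Ty; discriminate | reflexivity].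
Qed.

Lemma nwd_empty : nowhere_dense (fun _ => false).
Proof. intros p n. exists p, n. intros y Hy. split; [exact Hy | reflexivity]. Qed.

Lemma nwd_union (S T : cantor -> bool) :
  nowhere_dense S -> nowhere_dense T -> nowhere_dense (fun x => S x || T x).
Proof.
  intros HS HT p n. destruct (HS p n) as [q1 [m1 H1]].
  destruct (HT q1 m1) as [q2 [m2 H2]]. exists q2, m2. intros y Hy.
  destruct (H2 y Hy) as [Hq1y Ty]. destruct (H1 y Hq1y) as [Hpy Sy].
  split; [exact Hpy|]. rewrite Sy, Ty. reflexivity.
Qed.

Lemma nwd_singleton (p0 : cantor) : nowhere_dense (singleton p0).
Proof.
  intros p n. exists (fun k => if Nat.ltb k n then p k else negb (p0 k)), (S n).
  intros y Hy. split.
  - intros k Hk. rewrite <- Hy by lia. cbv beta. apply Nat.ltb_lt in Hk. rewrite Hk.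
    reflexivity.
  - apply not_true_iff_false. intro E. apply singleton_eq in E. subst y.
    specialize (Hy n (Nat.lt_succ_diag_r n)). cbv beta in Hy.
    rewrite Nat.ltb_irrefl in Hy.
    destruct (p0 n); discriminate.
Qed.

(* Two clopen sets differing by a nowhere dense set are equal: a subcylinder
   near any point, fine enough for both sets, misses their difference. *)
Lemma clopen_nwd_eq (D1 D2 : cantor -> bool) :
  clopen D1 -> clopen D2 -> nowhere_dense (fun x => xorb (D1 x) (D2 x)) ->
  forall x, D1 x = D2 x.
Proof.
  intros [n1 H1] [n2 H2] N x. destruct (N x (max n1 n2)) as [q [m Hqm]].
  destruct (Hqm q (fun k _ => eq_refl)) as [Hxq Dq].
  rewrite (H1 x q), (H2 x q) by (intros k Hk; apply Hxq; lia).
  destruct (D1 q), (D2 q); simpl in Dq; congruence.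
Qed.

Definition clopen_approx (S D : cantor -> bool) : Prop :=
  clopen D /\ nowhere_dense (fun x => xorb (S x) (D x)).

Lemma clopen_approx_combine (g : bool -> bool -> bool) (a b Da Db : cantor -> bool) :
  clopen_approx a Da -> clopen_approx b Db ->
  clopen_approx (fun x => g (a x) (b x)) (fun x => g (Da x) (Db x)).
Proof.
  intros [Ca Na] [Cb Nb]. split; [apply clopen_closed; assumption|].
  refine (nwd_subset _ _ _ (nwd_union _ _ Na Nb)). intros x Hx. cbv beta in *.
  destruct (a x), (Da x), (b x), (Db x); simpl; try reflexivity;
    rewrite xorb_nilpotent in Hx; discriminate.
Qed.

Lemma clopen_approx_unique (S D1 D2 : cantor -> bool) :
  clopen_approx S D1 -> clopen_approx S D2 -> forall x, D1 x = D2 x.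
Proof.
  intros [C1 N1] [C2 N2]. apply clopen_nwd_eq; [exact C1 | exact C2|].
  refine (nwd_subset _ _ _ (nwd_union _ _ N1 N2)). intros x Hx. cbv beta in *.
  destruct (S x), (D1 x), (D2 x); simpl in *; congruence.
Qed.

Lemma clopen_approx_self (D : cantor -> bool) : clopen D -> clopen_approx D D.
Proof.
  intro HD. split; [exact HD|].
  refine (nwd_subset _ _ _ nwd_empty). intros x Hx.
  rewrite xorb_nilpotent in Hx. exact Hx.
Qed.

Definition almost_clopen (S : cantor -> bool) : Prop := exists D, clopen_approx S D.

Lemma almost_clopen_closed : bool_closed almost_clopen.
Proof.
  intros g a b [Da Ha] [Db Hb]. eexists. exact (clopen_approx_combine g _ _ _ _ Ha Hb).
Qed.

Definition almost_clopen_alg : alg := field_of_sets almost_clopen_closed.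

(* It contains all singletons, hence is in K. *)
Lemma almost_clopen_alg_inK (sigma : signature) : inK sigma almost_clopen_alg.
Proof.
  apply inK_of_least_nbhds, singletons_least_nbhds. intro p.
  exists (fun _ => false). split; [exists 0; intros x y _; reflexivity|].
  refine (nwd_subset _ _ _ (nwd_singleton p)). intros x Hx.
  rewrite xorb_false_r in Hx. exact Hx.
Qed.

Definition clopen_part (s : member almost_clopen) : cantor -> bool :=
  proj1_sig (constructive_indefinite_description _ (proj2_sig s)).

Lemma clopen_part_spec (s : member almost_clopen) :
  clopen_approx (proj1_sig s) (clopen_part s).
Proof. exact (proj2_sig (constructive_indefinite_description _ (proj2_sig s))). Qed.

Definition quotient (s : member almost_clopen) : member clopen :=
  exist _ (clopen_part s) (proj1 (clopen_part_spec s)).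

Lemma quotient_surjective (b : member clopen) : exists a, quotient a = b.
Proof.
  pose proof (clopen_approx_self _ (proj2_sig b)) as Hb.
  set (a := exist almost_clopen (proj1_sig b) (ex_intro _ _ Hb)).
  exists a. apply member_ext.
  exact (clopen_approx_unique _ _ _ (clopen_part_spec a) Hb).
Qed.

Lemma quotient_hom (sigma : signature) :
  sigma_hom sigma almost_clopen_alg clopen_alg quotient.
Proof.
  apply boolean_map_hom. intros g a b.
  apply (clopen_approx_unique (proj1_sig (lift2 almost_clopen_closed g a b)) _
           (fun y => g (clopen_part a y) (clopen_part b y))).
  - apply clopen_part_spec.
  - exact (clopen_approx_combine g _ _ _ _ (clopen_part_spec a) (clopen_part_spec b)).
Qed.

Lemma not_closed_himg (sigma : signature) (Hres : sigma ORes = true) :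
  ~ K_closed_himg sigma.
Proof.
  intro H. apply (clopen_alg_not_inK sigma Hres).
  apply (H almost_clopen_alg clopen_alg quotient quotient_surjective).
  - apply quotient_hom.
  - apply almost_clopen_alg_inK.
Qed.

Ltac split_andb :=
  repeat match goal with
         | H : _ && _ = true |- _ => apply andb_prop in H; destruct H
         end.

Lemma eval_hom (sigma : signature) (A B : alg) (f : car A -> car B) :
  sigma_hom sigma A B f -> forall env t, term_ok sigma t = true ->
  f (eval A env t) = eval B (fun m => f (env m)) t.
Proof.
  intros [Hr [Hc [Hm [Hu [Hp [Hd Ha]]]]]] env t.
  induction t; cbn; intro Hok; split_andb;
    [reflexivity | rewrite Hr | rewrite Hc | rewrite Hm | rewrite Hu | rewrite Hp
    | rewrite Hd | rewrite Ha]; auto; f_equal; auto.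
Qed.

Lemma upd_env_map (T T' : Type) (f : T -> T') (env : nat -> T) (n : nat) (a : T) :
  (fun m => f (upd_env env n a m)) = upd_env (fun m => f (env m)) n (f a).
Proof.
  apply functional_extensionality. intro m. unfold upd_env. destruct (Nat.eqb m n); reflexivity.
Qed.

Lemma positive_preserved (sigma : signature) (A B : alg) (f : car A -> car B) :
  sigma_hom sigma A B f -> (forall b, exists a, f a = b) ->
  forall p, positive p -> formula_ok sigma p = true ->
  forall env, sat A env p -> sat B (fun m => f (env m)) p.
Proof.
  intros Hh Hsurj p Hp. induction Hp; cbn; intros Hok env H; split_andb.
  - exact I.
  - exact H.
  - rewrite <- !(eval_hom sigma A B f Hh) by assumption. rewrite H. reflexivity.
  - destruct H; split; auto.
  - destruct H; [left | right]; auto.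
  - intro b. destruct (Hsurj b) as [a <-]. rewrite <- upd_env_map. auto.
  - destruct H as [a Ha]. exists (f a). rewrite <- upd_env_map. auto.
Qed.

(* A class axiomatised by positive sentences is closed under homomorphic
   images: every assignment in the image lifts along the surjection. *)
Lemma positive_ax_closed_himg (sigma : signature) :
  axiomatisable_by sigma positive -> K_closed_himg sigma.
Proof.
  intros [T [HT Hax]] A B f Hsurj Hh HA. apply Hax. intros p Tp env.
  destruct (choice (fun m a => f a = env m) (fun m => Hsurj (env m))) as [envA HenvA].
  replace env with (fun m => f (envA m)) by (apply functional_extensionality; exact HenvA).
  apply (positive_preserved sigma A B f Hh Hsurj); try apply HT; auto.
  exact (proj1 (Hax A) HA p Tp envA).
Qed.

Fixpoint term_vars (t : term) : list nat :=
  match t with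
  | TVar n => n :: nil
  | TRes a b | TComp a b | TMeet a b | TUpd a b | TPref a b => term_vars a ++ term_vars b
  | TDom a | TAnt a => term_vars a
  end.

(* The variables occurring in a formula (a superset of its free variables). *)
Fixpoint formula_vars (p : formula) : list nat :=
  match p with
  | FTrue | FFalse => nil
  | FEq s t => term_vars s ++ term_vars t
  | FNot q | FAll _ q | FEx _ q => formula_vars q
  | FAnd q r | FOr q r | FImp q r => formula_vars q ++ formula_vars r
  end.

Lemma eval_agree (A : alg) (env1 env2 : nat -> car A) (t : term) :
  (forall m, In m (term_vars t) -> env1 m = env2 m) -> eval A env1 t = eval A env2 t.
Proof.
  induction t; cbn; intro H.
  1: apply H; left; reflexivity.
  6, 7: f_equal; apply IHt; exact H.
  all: f_equal; [apply IHt1 | apply IHt2]; intros m Hm; apply H, in_or_app; auto.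
Qed.

Lemma sat_agree (A : alg) (p : formula) : forall env1 env2 : nat -> car A,
  (forall m, In m (formula_vars p) -> env1 m = env2 m) ->
  (sat A env1 p <-> sat A env2 p).
Proof.
  induction p; cbn; intros env1 env2 H.
  - tauto.
  - tauto.
  - rewrite (eval_agree A env1 env2 t), (eval_agree A env1 env2 t0); [tauto | |];
      intros; apply H, in_or_app; auto.
  - rewrite (IHp env1 env2 H). tauto.
  - rewrite (IHp1 env1 env2), (IHp2 env1 env2); [tauto | |]; intros; apply H, in_or_app; auto.
  - rewrite (IHp1 env1 env2), (IHp2 env1 env2); [tauto | |]; intros; apply H, in_or_app; auto.
  - rewrite (IHp1 env1 env2), (IHp2 env1 env2); [tauto | |]; intros; apply H, in_or_app; auto.
  - assert (Hn : forall a, sat A (upd_env env1 n a) p <-> sat A (upd_env env2 n a) p).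
    { intro a. apply IHp. intros m Hm. unfold upd_env. destruct (Nat.eqb m n); auto. }
    split; intros Hs a; apply Hn, Hs.
  - assert (Hn : forall a, sat A (upd_env env1 n a) p <-> sat A (upd_env env2 n a) p).
    { intro a. apply IHp. intros m Hm. unfold upd_env. destruct (Nat.eqb m n); auto. }
    split; intros [a Hs]; exists a; apply Hn, Hs.
Qed.

Lemma qfree_reflected (sigma : signature) (A B : alg) (f : car A -> car B) :
  (forall x y, f x = f y -> x = y) -> sigma_hom sigma A B f ->
  forall p, qfree p = true -> formula_ok sigma p = true ->
  forall env, sat A env p <-> sat B (fun m => f (env m)) p.
Proof.
  intros Hinj Hh p. induction p; cbn; intros Hq Hok env; split_andb; try discriminate.
  - tauto.
  - tauto.
  - rewrite <- !(eval_hom sigma A B f Hh) by assumption.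
    split; intro E; [rewrite E; reflexivity | exact (Hinj _ _ E)].
  - rewrite IHp by assumption. tauto.
  - rewrite IHp1, IHp2 by assumption. tauto.
  - rewrite IHp1, IHp2 by assumption. tauto.
  - rewrite IHp1, IHp2 by assumption. tauto.
Qed.

Lemma existential_preserved (sigma : signature) (A B : alg) (f : car A -> car B) :
  (forall x y, f x = f y -> x = y) -> sigma_hom sigma A B f ->
  forall p, existential p -> formula_ok sigma p = true ->
  forall env, sat A env p -> sat B (fun m => f (env m)) p.
Proof.
  intros Hinj Hh p Hp. induction Hp as [p Hq | n p Hp IH]; intros Hok env Hs.
  - exact (proj1 (qfree_reflected sigma A B f Hinj Hh p Hq Hok env) Hs).
  - destruct Hs as [a Ha]. exists (f a). rewrite <- upd_env_map. exact (IH Hok _ Ha).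
Qed.

Lemma holds_FAll (A : alg) (n : nat) (q : formula) : holds A (FAll n q) -> holds A q.
Proof.
  intros H env. specialize (H env (env n)).
  replace (upd_env env n (env n)) with env in H; [exact H|].
  apply functional_extensionality. intro m. unfold upd_env.
  destruct (Nat.eqb_spec m n); [subst m|]; reflexivity.
Qed.

Section DirectedUnion.

Variables (sigma : signature) (I : Type) (Af : I -> alg) (U : alg)
          (e : forall i, car (Af i) -> car U).
Hypothesis I_inhabited : inhabited I.
Hypothesis e_embedding : forall i,
  (forall x y, e i x = e i y -> x = y) /\ sigma_hom sigma (Af i) U (e i).
Hypothesis e_directed : forall i j, exists k,
  (forall a, exists b, e k b = e i a) /\ (forall a, exists b, e k b = e j a).
Hypothesis e_covers : forall u, exists i a, e i a = u.

Lemma directed_finite_cover (l : list (car U)) :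
  exists k, forall u, In u l -> exists b, e k b = u.
Proof.
  induction l as [|u l [k Hk]].
  - destruct I_inhabited as [i]. exists i. intros u [].
  - destruct (e_covers u) as [j [a Ha]]. destruct (e_directed k j) as [k' [Hk1 Hk2]].
    exists k'. intros v [<- | Hv].
    + destruct (Hk2 a) as [b Hb]. exists b. congruence.
    + destruct (Hk v Hv) as [b0 Hb0]. destruct (Hk1 b0) as [b Hb]. exists b. congruence.
Qed.

(* An existential sigma-formula true in every member is true in the union:
   the values of its variables all come from one member. *)
Lemma existential_in_union (p : formula) :
  existential p -> formula_ok sigma p = true ->
  (forall i, holds (Af i) p) -> holds U p.
Proof.
  intros Hp Hok Hall env.
  destruct (directed_finite_cover (env 0 :: map env (formula_vars p))) as [k Hk].
  destruct (Hk (env 0) (or_introl eq_refl)) as [d _].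
  pose (envk := fun m => match excluded_middle_informative (exists b, e k b = env m) with
                         | left h => proj1_sig (constructive_indefinite_description _ h)
                         | right _ => d end).
  assert (Ek : forall m, In m (formula_vars p) -> e k (envk m) = env m).
  { intros m Hm. unfold envk. destruct (excluded_middle_informative _) as [h | h].
    - exact (proj2_sig (constructive_indefinite_description _ h)).
    - exfalso. apply h, Hk. right. apply in_map, Hm. }
  apply (sat_agree U p _ env Ek).
  apply (existential_preserved sigma (Af k) U (e k) (proj1 (e_embedding k))
           (proj2 (e_embedding k)) p Hp Hok), Hall.
Qed.

Lemma univ_exist_in_union (p : formula) :
  univ_exist p -> formula_ok sigma p = true ->
  (forall i, holds (Af i) p) -> holds U p.
Proof.
  intro Hp. induction Hp as [p Hp | n p Hp IH]; intros Hok Hall.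
  - exact (existential_in_union p Hp Hok Hall).
  - intros env a. apply IH; [exact Hok |]. intro i. exact (holds_FAll _ _ _ (Hall i)).
Qed.

End DirectedUnion.

Lemma univ_exist_ax_closed_dunion (sigma : signature) :
  axiomatisable_by sigma univ_exist -> K_closed_dunion sigma.
Proof.
  intros [T [HT Hax]] I Af U e Hinh He Hdir Hcov HK. apply Hax. intros p Tp.
  apply (univ_exist_in_union sigma I Af U e Hinh He Hdir Hcov p);
    try apply (HT p Tp).
  intro i. exact (proj1 (Hax (Af i)) (HK i) p Tp).
Qed.

Lemma universal_univ_exist (p : formula) : universal p -> univ_exist p.
Proof.
  induction 1; [apply ae_ex, ex_qf; assumption | apply ae_all; assumption].
Qed.

Lemma axiomatisable_weaken (sigma : signature) (kind kind' : formula -> Prop) :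
  (forall p, kind p -> kind' p) ->
  axiomatisable_by sigma kind -> axiomatisable_by sigma kind'.
Proof.
  intros Hk [T [HT Hax]]. exists T. split; [|exact Hax].
  intros p Tp. destruct (HT p Tp). split; auto.
Qed.

Theorem proposition4p7 (sigma : signature) (Hres : sigma ORes = true) :
  ~ K_closed_sub sigma /\
  ~ K_closed_dunion sigma /\
  ~ K_closed_himg sigma /\
  ~ axiomatisable_by sigma universal /\
  ~ axiomatisable_by sigma univ_exist /\
  ~ axiomatisable_by sigma positive.
Proof.
  pose proof (not_closed_dunion sigma Hres) as Hdunion.
  pose proof (not_closed_himg sigma Hres) as Hhimg.
  repeat split.
  - exact (not_closed_sub sigma Hres).
  - exact Hdunion.
  - exact Hhimg.
  - intro H. apply Hdunion, univ_exist_ax_closed_dunion.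
    exact (axiomatisable_weaken sigma universal univ_exist universal_univ_exist H).
  - intro H. apply Hdunion, univ_exist_ax_closed_dunion, H.
  - intro H. apply Hhimg, positive_ax_closed_himg, H.
Qed.
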